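(* Let $r, s, m, n$ be positive integers, let $f: [nm] \rightarrow \{-r,s\}$ be a function, and let $q = \frac{1}{n} f([nm])$. For $1\le i\le m$ let $I_i=\{(i-1)n+1,(i-1)n+2,\dots,in\}$. Then $[nm]$ can be decomposed into $n$ disjoint $(2n-1)$-bounded gap sequences $S_1, S_2, \ldots, S_n$, each of cardinality $m$, such that \[\lambda(q,r,s,m) \le f(S_j) \le \Lambda(q,r,s,m)\] and $|S_j \cap I_i| =1$ for all $1 \le j \le n$ and all $1 \le i \le m$.
   Context: $[N]=\{1,\dots,N\}$; $f(Y)=\sum_{y\in Y}f(y)$. A $d$-bounded gap sequence is a set of integers $a_1<a_2<\dots<a_k$ with $a_{i+1}-a_i\le d$ for all $1\le i\le k-1$. $L(r,s,m)=\{-rx+sy : x,y\in\mathbb{Z}, x,y\ge 0, x+y=m\}$, and for real $q\in[-rm,sm]$, $\lambda(q,r,s,m)=\max\{p\in L(r,s,m): p\le q\}$ and $\Lambda(q,r,s,m)=\min\{p\in L(r,s,m): p\ge q\}$. *)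

From mathcomp Require Import all_boot all_order all_algebra.
Set Implicit Arguments. Unset Strict Implicit. Unset Printing Implicit Defensive.
Import Order.TTheory GRing.Theory Num.Theory.
Local Open Scope ring_scope.

(* [N] = {1,...,N} is represented by naturals k with 1 <= k <= N. *)

(* f(Y) = sum_{y in Y} f y, for a finite set Y listed as a (duplicate-free) seq *)
Definition fsum (f : nat -> int) (Y : seq nat) : int := \sum_(y <- Y) f y.

Definition bounded_gap (d : nat) (s : seq nat) : bool :=
  sorted (fun a b => (a < b)%N && (b <= a + d)%N) s.

Definition Lval (r s m x : nat) : int := - (r * x)%:Z + (s * (m - x))%:Z.

Definition Lseq (r s m : nat) : seq int := [seq Lval r s m x | x <- iota 0 m.+1].

(* lambda(q,r,s,m) = max { p in L : p <= q }.  The default value -rm is the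
   minimum of L, which is <= q for every q in the domain [-rm, sm]. *)
Definition lambda (q : rat) (r s m : nat) : int :=
  foldr Num.max (- (r * m)%:Z) [seq p <- Lseq r s m | p%:~R <= q].

(* Lambda(q,r,s,m) = min { p in L : p >= q }.  Default sm is max of L. *)
Definition Lambda (q : rat) (r s m : nat) : int :=
  foldr Num.min ((s * m)%:Z) [seq p <- Lseq r s m | q <= p%:~R].

(* Deal the positions 1, ..., nm into n hands indexed by the residues mod n:
   the t-th position (counting from 0) where f is negative goes to hand
   t mod n, the t-th position where f is positive to hand n - 1 - (t mod n).
   If N negative and P positive positions precede a block I_i, then N + P is a
   multiple of n, so inside the block the negative positions go to the hands
   N, N + 1, ... and the positive ones to the hands N - 1, N - 2, ... (mod n).
   As the block has n positions, every hand receives exactly one of them; this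
   gives the sizes, the block condition and the gap bound 2n - 1.
   If X positions are negative, hand j receives c_j = #{t < X | t = j mod n}
   of them, so |n c_j - X| < n.  Finally f(S_j) = -r c_j + s (m - c_j), and
   n (-r x + s (m - x)) - n q = (r + s) (X - n x) shows that an element
   -r x + s (m - x) of L is at most q iff X <= n x; with the bound on c_j this
   puts f(S_j) between lambda and Lambda. *)

From mathcomp Require Import all_boot all_order all_algebra zify.
Set Implicit Arguments. Unset Strict Implicit. Unset Printing Implicit Defensive.
Import Order.TTheory GRing.Theory Num.Theory.

Lemma sorted_map_iota (T : Type) (e : rel T) (g : nat -> T) i m :
  (forall k, e (g k) (g k.+1)) -> sorted e (map g (iota i m)).
Proof.
move=> eg; case: m => //= m; elim: m i => [|m IHm] i //=.
by rewrite eg IHm.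
Qed.

Lemma modn_window_eq n x y : x <= y < x + n -> y = x %[mod n] -> y = x.
Proof.
case/andP=> xy yx /eqP; rewrite -(subnKC xy) -[X in _ == X %% _]addn0 eqn_modDl mod0n.
by rewrite modn_small ?ltn_subLR // => /eqP ->; rewrite addn0.
Qed.

Lemma modn_complement n x y : 0 < n -> x %% n = n.-1 - y %% n -> (x + y).+1 = 0 %[mod n].
Proof.
move=> n_gt0 e; have y_lt : y %% n <= n.-1 by rewrite -ltnS prednK ?ltn_pmod.
have -> : (x + y).+1 = (x %/ n + y %/ n).+1 * n.
  by rewrite {1}(divn_eq x n) {1}(divn_eq y n) e mulSn mulnDl; lia.
by rewrite modnMl mod0n.
Qed.

Lemma block_unique n b b' k : 0 < n ->
  b * n < k <= b * n + n -> b' * n < k <= b' * n + n -> b = b'.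
Proof.
move=> n_gt0 /andP[bk kb] /andP[bk' kb']; apply/eqP; rewrite eqn_leq -(ltnS b b') -(ltnS b' b).
rewrite -(ltn_pmul2r (n1 := b) n_gt0) -(ltn_pmul2r (n1 := b') n_gt0) !mulSn !(addnC n).
by rewrite (leq_trans bk kb') (leq_trans bk' kb).
Qed.

(* [j + n * c] is the least [t >= X] with [t = j %[mod n]]. *)
Lemma count_residue_window n X j : j < n ->
  X <= j + n * count (fun t => t %% n == j) (iota 0 X) < X + n.
Proof.
move=> j_lt; have n_gt0 : 0 < n by apply: leq_ltn_trans j_lt.
elim: X => [|X IHX]; first by rewrite /= muln0 addn0.
rewrite -addn1 iotaD count_cat /= add0n addn0.
set c := count _ _ in IHX *.
have res_jc : (j + n * c) %% n = j by rewrite addnC mulnC modnMDl modn_small.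
case: eqP => [res_X | /eqP res_X].
- have eq_X : j + n * c = X by apply: modn_window_eq IHX _; rewrite res_jc res_X.
  rewrite mulnDr muln1; lia.
- have : X != j + n * c by apply: contraNneq res_X => ->; rewrite res_jc.
  move: IHX; lia.
Qed.

Section Dealing.
Variables (a : pred nat) (n : nat).
Hypothesis n_gt0 : 0 < n.

Definition before k := count a (iota 1 k.-1).

Definition label k :=
  if a k then before k %% n else n.-1 - (k.-1 - before k) %% n.

Lemma label_lt k : label k < n.
Proof. by rewrite /label; case: (a k); [rewrite ltn_pmod | lia]. Qed.

Lemma beforeD k d : 0 < k -> before (k + d) = before k + count a (iota k d).
Proof.
move=> k_gt0; rewrite /before; have -> : (k + d).-1 = k.-1 + d by lia.
by rewrite iotaD count_cat add1n prednK.
Qed.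

Lemma before_window k k' : 0 < k < k' ->
  before k + a k <= before k' <= before k + a k + (k' - k.+1).
Proof.
case/andP=> k_gt0 kk'; have [d ->] : exists d, k' = k + d.+1 by exists (k' - k.+1); lia.
rewrite beforeD //= addnA leq_addr leq_add2l addnS subSS addKn.
by rewrite (leq_trans (count_size _ _)) ?size_iota.
Qed.

Lemma before_le k : before k <= k.-1.
Proof. by rewrite /before (leq_trans (count_size _ _)) ?size_iota. Qed.

Lemma label_block_inj b : {in [pred k | b * n < k <= b * n + n] &, injective label}.
Proof.
suff neq k k' : b * n < k -> k < k' -> k' <= b * n + n -> label k != label k'.
  move=> k k' /andP[bk kb] /andP[bk' k'b] e.
  case: (ltngtP k k') => // [lt | gt].
  - by move: (neq k k' bk lt k'b); rewrite e eqxx.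
  - by move: (neq k' k bk' gt kb); rewrite e eqxx.
move=> bk kk' k'b; have k_gt0 : 0 < k by apply: leq_ltn_trans bk.
have := @before_window k k'; rewrite k_gt0 kk' => /(_ isT) w.
have := before_le k; have := before_le k'.
have bn0 : b * n = 0 %[mod n] by rewrite modnMl mod0n.
(* Equal labels of same type force equal counts; in the two mixed cases they
   make [N + P + 1] a multiple of n strictly inside the block, where N counts the
   a-positions before the a-position and P the others before the other one. *)
rewrite /label; case ak: (a k); case ak': (a k') => /= le' le; apply/eqP.
- move=> /esym/modn_window_eq; lia.
- move=> /(modn_complement n_gt0); rewrite -bn0 => /modn_window_eq; lia.
- move=> /esym/(modn_complement n_gt0); rewrite -bn0 => /modn_window_eq; lia.
- have mod_le u : u %% n <= n.-1 by rewrite -ltnS prednK ?ltn_pmod.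
  move/eqP; rewrite eqn_sub2lE // => /eqP /esym /modn_window_eq; lia.
Qed.

Lemma count_label_block b j : j < n ->
  count (fun k => label k == j) (iota (b * n).+1 n) = 1.
Proof.
move=> j_lt; set blk := iota (b * n).+1 n.
have uniq_lab : uniq (map label blk).
  rewrite map_inj_in_uniq ?iota_uniq // => k k'; rewrite !mem_iota => bk bk'.
  by apply: (@label_block_inj b); rewrite inE /=; lia.
have sub_lab : {subset map label blk <= iota 0 n}.
  by move=> _ /mapP[k _ ->]; rewrite mem_iota label_lt.
have size_lab : size (iota 0 n) <= size (map label blk) by rewrite size_map !size_iota.
have [_ eq_lab] := uniq_min_size uniq_lab sub_lab size_lab.
have -> : count (fun k => label k == j) blk = count_mem j (map label blk) by rewrite count_map.
by rewrite (count_uniq_mem _ uniq_lab) eq_lab mem_iota j_lt.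
Qed.

Definition rep j b := head 0 [seq k <- iota (b * n).+1 n | label k == j].

Lemma filter_label_block j b : j < n ->
  [seq k <- iota (b * n).+1 n | label k == j] = [:: rep j b].
Proof.
move=> /(count_label_block b); rewrite -size_filter /rep.
by case: [seq k <- _ | _] => [|k [|]].
Qed.

Lemma rep_in_block j b : j < n -> b * n < rep j b <= b * n + n.
Proof.
move=> j_lt; have : rep j b \in [seq k <- iota (b * n).+1 n | label k == j].
  by rewrite filter_label_block ?mem_head.
by rewrite mem_filter mem_iota addSn ltnS => /andP[].
Qed.

Definition hand m j := [seq k <- iota 1 (n * m) | label k == j].

Lemma mem_hand m j k : (k \in hand m j) = (0 < k <= n * m) && (label k == j).
Proof. by rewrite mem_filter mem_iota add1n ltnS andbC. Qed.

Lemma hand_rep m j : j < n -> hand m j = map (rep j) (iota 0 m).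
Proof.
move=> j_lt; elim: m => [|m IHm]; first by rewrite /hand muln0.
rewrite /hand mulnS addnC iotaD filter_cat -/(hand m j) IHm add1n mulnC.
by rewrite filter_label_block // -addn1 iotaD map_cat.
Qed.

Lemma size_hand m j : j < n -> size (hand m j) = m.
Proof. by move=> j_lt; rewrite hand_rep // size_map size_iota. Qed.

Lemma bounded_gap_hand m j : j < n -> bounded_gap (2 * n - 1) (hand m j).
Proof.
move=> j_lt; rewrite hand_rep //; apply: sorted_map_iota => b.
by have := rep_in_block b j_lt; have := rep_in_block b.+1 j_lt; rewrite mulSn; lia.
Qed.

Lemma count_hand_block m j i : j < n -> i < m ->
  count (fun k => i * n < k <= i * n + n) (hand m j) = 1.
Proof.
move=> j_lt i_lt; rewrite hand_rep // count_map (@eq_in_count _ _ (pred1 i)).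
  by rewrite count_uniq_mem ?iota_uniq // mem_iota i_lt.
move=> b _ /=; apply/idP/eqP => [ib | ->]; last exact: rep_in_block.
exact: block_unique n_gt0 (rep_in_block b j_lt) ib.
Qed.

Lemma map_before_filter K :
  map before (filter a (iota 1 K)) = iota 0 (count a (iota 1 K)).
Proof.
elim: K => [|K IHK] //; rewrite -[K.+1]addn1 iotaD filter_cat map_cat count_cat IHK /=.
by case: (a (1 + K)); rewrite /= ?addn0 ?cats0 // iotaD /before add1n.
Qed.

Lemma count_hand m j :
  count a (hand m j) = count (fun t => t %% n == j) (iota 0 (count a (iota 1 (n * m)))).
Proof.
rewrite -map_before_filter count_map count_filter count_filter.
by apply: eq_count => k /=; rewrite /label; case: (a k); rewrite ?andbT ?andbF.
Qed.

Lemma hand_balanced m j : j < n ->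
  let X := count a (iota 1 (n * m)) in
  n * count a (hand m j) < X + n /\ X < n * count a (hand m j) + n.
Proof. by move=> j_lt X; have := count_residue_window X j_lt; rewrite -count_hand; lia. Qed.

End Dealing.

Local Open Scope ring_scope.

Section LSet.
Variables r s : nat.
Implicit Type m : nat.

Lemma LvalE m x : (x <= m)%N -> Lval r s m x = (s * m)%:Z - ((r + s) * x)%:Z.
Proof. rewrite /Lval; nia. Qed.

Lemma Lval_le m x y : (0 < r + s)%N -> (x <= m)%N -> (y <= m)%N ->
  (Lval r s m y <= Lval r s m x) = (x <= y)%N.
Proof. by move=> rs_gt0 xm ym; rewrite !LvalE // lerD2l lerN2 lez_nat leq_pmul2l. Qed.

Lemma Lval_antitone m x y : (x <= y <= m)%N -> Lval r s m y <= Lval r s m x.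
Proof.
move=> /andP[xy ym]; rewrite !LvalE ?(leq_trans xy) //.
by rewrite lerD2l lerN2 lez_nat leq_mul2l xy orbT.
Qed.

Lemma LvalM m n x : Lval r s (n * m) (n * x) = Lval r s m x * n%:Z.
Proof. rewrite /Lval -mulnBr; nia. Qed.

Lemma lambda_le_Lval q m c : (c <= m)%N ->
  (forall x, (x <= m)%N -> (Lval r s m x)%:~R <= q -> (c <= x)%N) ->
  lambda q r s m <= Lval r s m c.
Proof.
move=> cm qc; rewrite /lambda foldrE big_filter big_map big_seq_cond.
have -> : - (r * m)%:Z = Lval r s m m by rewrite /Lval subnn muln0 addr0.
apply: bigmax_le => [|x /andP[]]; first by apply: Lval_antitone; rewrite cm leqnn.
by rewrite mem_iota ltnS => xm /(qc x xm) cx; apply: Lval_antitone; rewrite cx.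
Qed.

Lemma Lval_le_Lambda q m c : (c <= m)%N ->
  (forall x, (x <= m)%N -> q <= (Lval r s m x)%:~R -> (x <= c)%N) ->
  Lval r s m c <= Lambda q r s m.
Proof.
move=> cm qc; rewrite /Lambda foldrE big_filter big_map big_seq_cond.
have -> : (s * m)%:Z = Lval r s m 0 by rewrite /Lval muln0 subn0 add0r.
apply: le_bigmin => [|x /andP[]]; first exact: Lval_antitone.
by rewrite mem_iota ltnS => xm /(qc x xm) xc; apply: Lval_antitone; rewrite xc.
Qed.

Section Average.
Variables (m n X : nat).
Hypotheses (rs_gt0 : (0 < r + s)%N) (n_gt0 : (0 < n)%N) (X_le : (X <= n * m)%N).
Let q : rat := (Lval r s (n * m) X)%:~R / n%:R.

Lemma Lval_le_avg x : (x <= m)%N -> ((Lval r s m x)%:~R <= q) = (X <= n * x)%N.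
Proof.
move=> xm; rewrite ler_pdivlMr ?ltr0n // -[n%:R]/(n%:Z%:~R) -intrM ler_int -LvalM.
by rewrite Lval_le // leq_pmul2l.
Qed.

Lemma avg_le_Lval x : (x <= m)%N -> (q <= (Lval r s m x)%:~R) = (n * x <= X)%N.
Proof.
move=> xm; rewrite ler_pdivrMr ?ltr0n // -[n%:R]/(n%:Z%:~R) -intrM ler_int -LvalM.
by rewrite Lval_le // leq_pmul2l.
Qed.

Lemma Lval_between c : (c <= m)%N -> (n * c < X + n)%N -> (X < n * c + n)%N ->
  lambda q r s m <= Lval r s m c <= Lambda q r s m.
Proof.
move=> cm lo hi; apply/andP; split.
- apply: lambda_le_Lval => // x xm; rewrite Lval_le_avg // => Xx.
  by rewrite -ltnS -(ltn_pmul2l n_gt0) mulnSr (leq_trans lo) ?leq_add2r.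
- apply: Lval_le_Lambda => // x xm; rewrite avg_le_Lval // => xX.
  by rewrite -ltnS -(ltn_pmul2l n_gt0) mulnSr (leq_ltn_trans xX).
Qed.
End Average.
End LSet.

Lemma fsum_Lval (f : nat -> int) (r s : nat) (l : seq nat) : (0 < r)%N ->
  {in l, forall k, f k = - r%:Z \/ f k = s%:Z} ->
  fsum f l = Lval r s (size l) (count (fun k => f k < 0) l).
Proof.
move=> r_gt0; elim: l => [|k l IHl] fl; first by rewrite /fsum big_nil /Lval !muln0.
rewrite /fsum big_cons -/(fsum f l) IHl => [|i li]; last by apply: fl; rewrite inE li orbT.
have cl := count_size (fun k => f k < 0) l.
rewrite /= !LvalE ?(leq_add (leq_b1 _)) //.
case: (fl k (mem_head _ _)) => ->.
- by rewrite oppr_lt0 ltz_nat r_gt0; nia.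
- by rewrite ltNge lez_nat; nia.
Qed.

Theorem theorem4p6 (r s m n : nat) (f : nat -> int)
  (hr : (0 < r)%N) (hs : (0 < s)%N) (hm : (0 < m)%N) (hn : (0 < n)%N)
  (hf : forall k, (1 <= k <= n * m)%N -> f k = - (r%:Z) \/ f k = s%:Z) :
  let q : rat := (\sum_(1 <= k < (n * m).+1) f k)%:~R / n%:R in
  exists S : 'I_n -> seq nat,
    (* S_1,...,S_n is a decomposition of [nm] into disjoint sets *)
    (forall j k, k \in S j -> (1 <= k <= n * m)%N) /\
    (forall k, (1 <= k <= n * m)%N -> exists j, k \in S j) /\
    (forall j j' k, k \in S j -> k \in S j' -> j = j') /\
    (forall j : 'I_n,
       (* S_j is a (2n-1)-bounded gap sequence of cardinality m *)
       bounded_gap (2 * n - 1) (S j) /\ size (S j) = m /\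
       lambda q r s m <= fsum f (S j) <= Lambda q r s m /\
       (* |S_j ∩ I_i| = 1 with I_i = {(i-1)n+1, ..., in} *)
       (forall i, (1 <= i <= m)%N ->
          count (fun k => ((i - 1) * n < k <= i * n)%N) (S j) = 1%N)).
Proof.
pose a : pred nat := fun k => f k < 0.
have f_iota : {in iota 1 (n * m), forall k, f k = - r%:Z \/ f k = s%:Z}.
  by move=> k; rewrite mem_iota add1n ltnS; exact: hf.
have -> : \sum_(1 <= k < (n * m).+1) f k = Lval r s (n * m) (count a (iota 1 (n * m))).
  by rewrite /index_iota subn1 -/(fsum f _) (fsum_Lval hr f_iota) size_iota.
exists (fun j : 'I_n => hand a n m j); split; [|split; [|split]].
- by move=> j k; rewrite mem_hand => /andP[].
- by move=> k k_in; exists (Ordinal (label_lt a hn k)); rewrite mem_hand k_in eqxx.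
- move=> j j' k; rewrite !mem_hand => /andP[_ /eqP kj] /andP[_ /eqP kj'].
  by apply: val_inj; rewrite /= -kj -kj'.
move=> j; have j_lt := ltn_ord j; have [lo hi] := hand_balanced a hn m j_lt.
have hand_f : {in hand a n m j, forall k, f k = - r%:Z \/ f k = s%:Z}.
  by move=> k; rewrite mem_hand => /andP[/hf].
split; first exact: bounded_gap_hand.
split; first exact: size_hand.
split.
- rewrite (fsum_Lval hr hand_f) size_hand //; apply: Lval_between => //.
  + by rewrite addn_gt0 hr.
  + by rewrite (leq_trans (count_size _ _)) ?size_iota.
  + by rewrite (leq_trans (count_size _ _)) ?size_hand.
- case=> // i /andP[_ i_lt]; rewrite subn1 mulSnr.
  exact: count_hand_block.
Qed.
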